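(* Let $G$ be a finitely presentable group with no elements of order two. Then there exists a finite presentation $\Pi$ of $G$ such that $\ell(\Pi)=T(G)$ and every relator of $\Pi$ has length at least three; consequently $T_1(G)\le\ell_1(\Pi)\le 3\ell(\Pi)=3T(G)$. In particular, \[ T(G)\le T_1(G)\le 3T(G). \]
   Context: For a finite presentation $\Pi=\langle X\mid R\rangle$: $\ell(\Pi)=\sum_{r\in R}\max\{|r|-2,0\}$ and $\ell_1(\Pi)=\sum_{r\in R}|r|$. For a finitely presentable group $G$: $T(G)=\min\{\ell(\Pi)\}$ and $T_1(G)=\min\{\ell_1(\Pi)\}$, the minima taken over all finite presentations $\Pi$ of $G$. *)

From Stdlib Require Import ClassicalEpsilon.
From mathcomp Require Import all_boot.
Set Implicit Arguments. Unset Strict Implicit. Unset Printing Implicit Defensive.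

Record group := Group {
  carrier :> Type;
  gmul : carrier -> carrier -> carrier;
  ginv : carrier -> carrier;
  gone : carrier;
  gmulA : forall x y z, gmul x (gmul y z) = gmul (gmul x y) z;
  gmul1 : forall x, gmul gone x = x;
  gmulV : forall x, gmul (ginv x) x = gone
}.

(* A letter is a generator i together with a flag: false = x_i, true = x_i^{-1}. *)
Definition letter (n : nat) := ('I_n * bool)%type.
Definition word (n : nat) := seq (letter n).
Definition linv n (a : letter n) : letter n := (a.1, ~~ a.2).

Record presentation := Pres {
  pn : nat;
  prels : seq (word pn)
}.

(* ell(Pi) = sum_r max(|r|-2, 0) (truncated subtraction), ell_1(Pi) = sum_r |r| *)
Definition ell (P : presentation) : nat := \sum_(r <- prels P) (size r - 2).
Definition ell1 (P : presentation) : nat := \sum_(r <- prels P) size r.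

(* A word is trivial in <X|R> iff it is equivalent to the empty word, i.e. iff it
   lies in the normal closure of R in the free group on X. *)
Inductive pequiv (P : presentation) : word (pn P) -> word (pn P) -> Prop :=
| pe_refl w : @pequiv P w w
| pe_sym u v : @pequiv P u v -> @pequiv P v u
| pe_trans u v w : @pequiv P u v -> @pequiv P v w -> @pequiv P u w
| pe_free u v a : @pequiv P (u ++ v) (u ++ a :: linv a :: v)
| pe_rel u v r : r \in prels P -> @pequiv P (u ++ v) (u ++ r ++ v).

Definition eval_word (G : group) n (f : 'I_n -> G) (w : word n) : G :=
  foldr (fun a acc => gmul (if a.2 then ginv (f a.1) else f a.1) acc) (gone G) w.

Definition presents (P : presentation) (G : group) : Prop :=
  exists f : 'I_(pn P) -> G,
    (forall g : G, exists w, eval_word f w = g) /\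
    (forall w, eval_word f w = gone G <-> @pequiv P w [::]).

Definition finitely_presentable (G : group) : Prop := exists P, presents P G.

Definition is_min_over (m : presentation -> nat) (G : group) (t : nat) : Prop :=
  (exists P, presents P G /\ m P = t) /\ (forall P, presents P G -> t <= m P).

Definition Tinv (G : group) : nat := epsilon (inhabits 0%N) (is_min_over ell G).
Definition T1inv (G : group) : nat := epsilon (inhabits 0%N) (is_min_over ell1 G).

(* Among the presentations of G realising T(G), take one with the fewest generators
   plus relators. It has no relator of length at most two, since a Tietze move would
   remove such a relator without increasing ell: the empty relator and x x^-1 are
   redundant; x^(+-1) and x^(+-2) force x = 1 because G has no involutions; and
   x^(+-1) y^(+-1) with y <> x lets us eliminate x by substituting a letter in y, which
   never lengthens a relator. Once every relator has length at least three,
   |r| <= 3 (|r| - 2) gives ell1 <= 3 ell. *)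

From mathcomp Require Import all_boot zify.
From Stdlib Require Import Classical ClassicalEpsilon Wf_nat.
Set Implicit Arguments. Unset Strict Implicit. Unset Printing Implicit Defensive.

Section GroupTheory.
Variable G : group.
Implicit Types x y : G.

Lemma gmulgV x : gmul x (ginv x) = gone G.
Proof.
rewrite -[gmul x _]gmul1 -[in gmul (gone G) _](gmulV (ginv x)).
by rewrite -gmulA [gmul (ginv x) (gmul x _)]gmulA gmulV gmul1 gmulV.
Qed.

Lemma gmulg1 x : gmul x (gone G) = x.
Proof. by rewrite -(gmulV x) gmulA gmulgV gmul1. Qed.

Lemma ginv_uniq x y : gmul x y = gone G -> y = ginv x.
Proof. by move=> xy1; rewrite -[y]gmul1 -(gmulV x) -gmulA xy1 gmulg1. Qed.

Lemma ginvK x : ginv (ginv x) = x.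
Proof. by symmetry; apply: ginv_uniq; apply: gmulV. Qed.

Lemma ginv1 : ginv (gone G) = gone G.
Proof. by symmetry; apply: ginv_uniq; apply: gmul1. Qed.

Lemma ginvM x y : ginv (gmul x y) = gmul (ginv y) (ginv x).
Proof.
symmetry; apply: ginv_uniq.
by rewrite gmulA -[gmul (gmul x y) _]gmulA gmulgV gmulg1 gmulgV.
Qed.

End GroupTheory.

Section Words.
Variables (G : group) (n : nat) (f : 'I_n -> G).
Implicit Types (a b : letter n) (u v w : word n).

Definition eval_letter a : G := if a.2 then ginv (f a.1) else f a.1.

Definition inv_word w : word n := rev (map (@linv n) w).

Lemma linvK : involutive (@linv n).
Proof. by case=> i e; rewrite /linv /= negbK. Qed.

Lemma inv_wordK : involutive inv_word.
Proof. by move=> w; rewrite /inv_word map_rev revK (mapK linvK). Qed.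

Lemma size_inv_word w : size (inv_word w) = size w.
Proof. by rewrite size_rev size_map. Qed.

Lemma eval_word_cons a w : eval_word f (a :: w) = gmul (eval_letter a) (eval_word f w).
Proof. by []. Qed.

Lemma eval_word_cat u v : eval_word f (u ++ v) = gmul (eval_word f u) (eval_word f v).
Proof. by elim: u => [|a u IHu] /=; rewrite ?gmul1 // IHu gmulA. Qed.

Lemma eval_word1 a : eval_word f [:: a] = eval_letter a.
Proof. exact: gmulg1. Qed.

Lemma eval_letter_linv a : eval_letter (linv a) = ginv (eval_letter a).
Proof. by rewrite /eval_letter /=; case: a.2; rewrite ?ginvK. Qed.

Lemma eval_inv_word w : eval_word f (inv_word w) = ginv (eval_word f w).
Proof.
elim: w => [|a w IHw] /=; first by rewrite ginv1.
by rewrite /inv_word /= rev_cons -cats1 eval_word_cat eval_word1 eval_letter_linv IHw ginvM.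
Qed.

Lemma eval_letter_eq1 a : eval_letter a = gone G -> f a.1 = gone G.
Proof. by rewrite /eval_letter; case: a.2 => // /(congr1 (@ginv G)); rewrite ginvK ginv1. Qed.

Lemma eval_gen_from_pair_relator a b :
    gmul (eval_letter a) (eval_letter b) = gone G ->
  f a.1 = eval_letter (if a.2 then b else linv b).
Proof.
by case: a => i [] /ginv_uniq /= eb; rewrite ?eval_letter_linv eb ginvK.
Qed.

End Words.

Section Equivalence.
Variable P : presentation.
Implicit Types (a : letter (pn P)) (u v w x y : word (pn P)).

Lemma pequiv_ctx x y u v : pequiv u v -> pequiv (x ++ u ++ y) (x ++ v ++ y).
Proof.
elim=> {u v} [w|u v _|u v w _ uv _ vw|u v a|u v r Rr].
- exact: pe_refl.
- exact: pe_sym.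
- exact: pe_trans uv vw.
- by rewrite -!catA /= !(catA x u); apply: pe_free.
- by rewrite -!catA !(catA x u); apply: pe_rel.
Qed.

Lemma pequiv_cat u u' v v' : pequiv u u' -> pequiv v v' -> pequiv (u ++ v) (u' ++ v').
Proof.
move=> uu' vv'; apply: (@pe_trans _ _ (u' ++ v)).
- exact: (pequiv_ctx [::] v uu').
- by have := pequiv_ctx u' [::] vv'; rewrite !cats0.
Qed.

Lemma pequiv_cancel a : pequiv [:: a; linv a] [::].
Proof. exact/pe_sym/(@pe_free P [::] [::]). Qed.

Lemma pequiv_relator r : r \in prels P -> pequiv r [::].
Proof. by move=> Rr; apply: pe_sym; rewrite -[r]cats0; apply: (@pe_rel P [::] [::]). Qed.

Lemma pequiv_cancel_word w : pequiv (w ++ inv_word w) [::].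
Proof.
elim: w => [|a w IHw]; first exact: pe_refl.
rewrite /inv_word /= rev_cons -cats1 -/(inv_word w) catA.
apply: pe_trans (pequiv_cancel a).
by have := pequiv_ctx [:: a] [:: linv a] IHw; rewrite -!catA.
Qed.

Lemma eval_word_pequiv (G : group) (f : 'I_(pn P) -> G) :
    (forall r, r \in prels P -> eval_word f r = gone G) ->
  forall u v, pequiv u v -> eval_word f u = eval_word f v.
Proof.
move=> fR u v; elim=> {u v} [//|u v _ -> //|u v w _ -> _ -> //|u v a|u v r Rr].
- rewrite !eval_word_cat !eval_word_cons eval_letter_linv.
  by rewrite [gmul (eval_letter f a) _]gmulA gmulgV gmul1.
- by rewrite !eval_word_cat (fR r Rr) gmul1.
Qed.

End Equivalence.

Section Substitution.
Variables (n m : nat) (psi : letter n -> word m).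
Implicit Types (a : letter n) (u v w : word n).

Definition subst_word w : word m := flatten (map psi w).

Lemma subst_word_cons a w : subst_word (a :: w) = psi a ++ subst_word w.
Proof. by []. Qed.

Lemma subst_word_cat u v : subst_word (u ++ v) = subst_word u ++ subst_word v.
Proof. by rewrite /subst_word map_cat flatten_cat. Qed.

Lemma eval_subst_word (G : group) (f : 'I_n -> G) (g : 'I_m -> G) :
    (forall a, eval_word g (psi a) = eval_letter f a) ->
  forall w, eval_word g (subst_word w) = eval_word f w.
Proof. by move=> psi_f; elim=> // a w IHw; rewrite subst_word_cons eval_word_cat IHw psi_f. Qed.

End Substitution.

Lemma subst_word_id n (w : word n) : subst_word (fun a => [:: a]) w = w.
Proof. by elim: w => // a w IHw; rewrite subst_word_cons IHw. Qed.

Definition presents_by (P : presentation) (G : group) (f : 'I_(pn P) -> G) : Prop :=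
  (forall g : G, exists w, eval_word f w = g) /\
  (forall w, eval_word f w = gone G <-> @pequiv P w [::]).
Arguments presents_by : clear implicits.

(* The substitutions psi and phi induce mutually inverse isomorphisms between the groups
   presented by P and P'; as P is known to present G, only the composite psi o phi has to
   be checked on P'. *)
Section Tietze.
Variables (G : group) (P P' : presentation).
Variables (f : 'I_(pn P) -> G) (f' : 'I_(pn P') -> G).
Variables (psi : letter (pn P) -> word (pn P')) (phi : letter (pn P') -> word (pn P)).
Hypothesis presP : presents_by P G f.
Hypothesis eval_psi : forall a, eval_word f' (psi a) = eval_letter f a.
Hypothesis eval_phi : forall b, eval_word f (phi b) = eval_letter f' b.
Hypothesis relsP' : forall r, r \in prels P' -> eval_word f' r = gone G.
Hypothesis psi_rels : forall r, r \in prels P -> @pequiv P' (subst_word psi r) [::].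
Hypothesis psi_linv : forall a, @pequiv P' (psi a ++ psi (linv a)) [::].
Hypothesis psi_phi : forall b, @pequiv P' [:: b] (subst_word psi (phi b)).

Lemma pequiv_subst_word u v : @pequiv P u v -> @pequiv P' (subst_word psi u) (subst_word psi v).
Proof.
elim=> {u v} [w|u v _|u v w _ uv _ vw|u v a|u v r Rr].
- exact: pe_refl.
- exact: pe_sym.
- exact: pe_trans uv vw.
- rewrite !subst_word_cat !subst_word_cons catA; apply: pe_sym.
  by have := pequiv_ctx (subst_word psi u) (subst_word psi v) (psi_linv a); rewrite -!catA.
- rewrite !subst_word_cat; apply: pe_sym.
  exact: (pequiv_ctx _ _ (psi_rels Rr)).
Qed.

Lemma pequiv_subst_phi w : @pequiv P' w (subst_word psi (subst_word phi w)).
Proof.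
elim: w => [|b w IHw]; first exact: pe_refl.
by rewrite subst_word_cons subst_word_cat; apply: (@pequiv_cat P' [:: b]).
Qed.

Lemma presents_by_tietze : presents_by P' G f'.
Proof.
have [onto kerP] := presP; split=> [g|w].
  by have [w <-] := onto g; exists (subst_word psi w); apply: eval_subst_word.
split=> [w1|]; last exact: eval_word_pequiv relsP' w [::].
have /kerP/pequiv_subst_word : eval_word f (subst_word phi w) = gone G.
  by rewrite (eval_subst_word eval_phi).
exact: pe_trans (pequiv_subst_phi w).
Qed.

End Tietze.

Definition pres_size (P : presentation) : nat := pn P + size (prels P).

Definition smaller_pres (G : group) (P P' : presentation) : Prop :=
  [/\ presents P' G, ell P' <= ell P & pres_size P' < pres_size P].

Definition drop_relator (P : presentation) (r0 : word (pn P)) : presentation :=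
  @Pres (pn P) (rem r0 (prels P)).
Arguments drop_relator : clear implicits.

Lemma smaller_pres_drop_relator G P f r0 :
    presents_by P G f -> r0 \in prels P -> @pequiv (drop_relator P r0) r0 [::] ->
  smaller_pres G P (drop_relator P r0).
Proof.
move=> presP Pr0 r0_triv; split.
- exists f.
  apply: (@presents_by_tietze G P (drop_relator P r0) f f
            (fun a => [:: a]) (fun a => [:: a]) presP).
  + by move=> a; rewrite eval_word1.
  + by move=> b; rewrite eval_word1.
  + by move=> r /mem_rem Rr; apply/(proj2 presP)/pequiv_relator.
  + move=> r; rewrite subst_word_id (perm_mem (perm_to_rem Pr0)) in_cons.
    by case/predU1P=> [-> //|]; apply: (@pequiv_relator (drop_relator P r0)).
  + by move=> a; apply: pequiv_cancel.
  + by move=> b; apply: pe_refl.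
- by rewrite /ell /= (big_rem _ Pr0) leq_addl.
- by rewrite /pres_size /= size_rem //; case: (prels P) Pr0 => //= *; rewrite addnS.
Qed.

Section EliminateGenerator.
Variables (m : nat) (i : 'I_m.+1) (s : word m).

Definition subst_gen (a : letter m.+1) : word m :=
  if unlift i a.1 is Some k then [:: (k, a.2)] else if a.2 then inv_word s else s.

Definition elim_gen (R : seq (word m.+1)) : presentation :=
  @Pres m (map (subst_word subst_gen) R).

Lemma size_subst_gen w : size s <= 1 -> size (subst_word subst_gen w) <= size w.
Proof.
move=> s_le1; elim: w => [|a w IHw] //.
rewrite subst_word_cons size_cat -[size (a :: w)]add1n leq_add //.
by rewrite /subst_gen; case: (unlift i a.1) => //; case: a.2; rewrite ?size_inv_word.
Qed.

Lemma smaller_pres_elim_gen G (R : seq (word m.+1)) f :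
    presents_by (Pres R) G f -> eval_word (f \o lift i) s = f i -> size s <= 1 ->
  smaller_pres G (Pres R) (elim_gen R).
Proof.
move=> presP s_fi s_le1.
have eval_subst_gen a : eval_word (f \o lift i) (subst_gen a) = eval_letter f a.
  case: a => j e; rewrite /subst_gen /=; case: unliftP => [k ->|->]; first exact: eval_word1.
  by case: e; rewrite ?eval_inv_word s_fi.
split.
- exists (f \o lift i).
  apply: (@presents_by_tietze G (Pres R) (elim_gen R) f (f \o lift i) subst_gen
            (fun b => [:: (lift i b.1, b.2)]) presP eval_subst_gen).
  + by move=> b; rewrite !eval_word1.
  + move=> _ /mapP [r Rr ->]; rewrite (eval_subst_word eval_subst_gen).
    exact/(proj2 presP)/pequiv_relator.
  + by move=> r Rr; apply/(@pequiv_relator (elim_gen R))/map_f.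
  + case=> j e; rewrite /subst_gen /linv /=; case: (unlift i j) => [k|].
      exact: (@pequiv_cancel (elim_gen R) (k, e)).
    case: e => /=; last exact: pequiv_cancel_word.
    by rewrite -{2}(inv_wordK s); apply: pequiv_cancel_word.
  + by case=> k e; rewrite /subst_word /= /subst_gen liftK cats0; apply: pe_refl.
- rewrite /ell /= (big_map (subst_word subst_gen) xpredT (fun r => size r - 2)).
  apply: leq_sum => r _.
  exact/leq_sub2r/size_subst_gen.
- by rewrite /pres_size /= size_map.
Qed.

End EliminateGenerator.

Lemma smaller_pres_short_relator_S m (R : seq (word m.+1)) G f a t :
    presents_by (Pres R) G f -> (forall g : G, gmul g g = gone G -> g = gone G) ->
    a :: t \in R -> size t <= 1 ->
  exists P', smaller_pres G (Pres R) P'.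
Proof.
move=> presP no2 Rat t_le1.
have rel1 : eval_word f (a :: t) = gone G by apply/(proj2 presP)/pequiv_relator.
have elim_trivial_gen : f a.1 = gone G -> exists P', smaller_pres G (Pres R) P'.
  move=> fa1; exists (elim_gen a.1 [::] R).
  by apply: smaller_pres_elim_gen presP _ _; rewrite ?fa1.
case: t t_le1 Rat rel1 => [|b [|//]] _ Rat rel1.
  by apply/elim_trivial_gen/eval_letter_eq1; rewrite -eval_word1.
rewrite eval_word_cons eval_word1 in rel1.
case: a b Rat rel1 elim_trivial_gen => i e [j e'] Rr rel1 /= elim_trivial_gen.
case: (unliftP i j) => [k ->|->] in Rr rel1 *.
- exists (elim_gen i [:: if e then (k, e') else linv (k, e')] R).
  apply: smaller_pres_elim_gen presP _ _ => //.
  by rewrite (eval_gen_from_pair_relator rel1) eval_word1; case: (e).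
- case: (eqVneq e e') => [<-|ee'] in Rr rel1 *.
    by apply: elim_trivial_gen; apply: (@eval_letter_eq1 _ _ f (i, e)); apply: no2.
  exists (drop_relator (Pres R) [:: (i, e); (i, e')]).
  apply: smaller_pres_drop_relator presP Rr _.
  have -> : e' = ~~ e by case: (e) (e') ee' => [] [].
  exact: pequiv_cancel.
Qed.

Lemma smaller_pres_short_relator G P r :
    presents P G -> (forall g : G, gmul g g = gone G -> g = gone G) ->
    r \in prels P -> size r <= 2 ->
  exists P', smaller_pres G P P'.
Proof.
move=> [f presP] no2 Pr size_r.
case: r => [|a t] in Pr size_r *.
  by exists (drop_relator P [::]); apply: smaller_pres_drop_relator presP Pr (pe_refl _).
case: P f presP a t Pr size_r => [[|m] R] f presP [i e] t Pr size_r; first by case: (i).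
exact: smaller_pres_short_relator_S presP no2 Pr size_r.
Qed.

Lemma exists_minimal (A : Type) (Q : A -> Prop) (mu : A -> nat) :
  (exists x, Q x) -> exists x, Q x /\ forall y, Q y -> mu x <= mu y.
Proof.
move=> [x0 Qx0].
have [k [[[x [Qx <-]] min_k] _]] :=
  dec_inh_nat_subset_has_unique_least_element (fun k => exists x, Q x /\ mu x = k)
    (fun k => classic _) (ex_intro _ (mu x0) (ex_intro _ x0 (conj Qx0 erefl))).
by exists x; split=> // y Qy; apply/leP/min_k; exists y.
Qed.

Lemma is_min_over_epsilon (mu : presentation -> nat) G :
  finitely_presentable G -> is_min_over mu G (epsilon (inhabits 0) (is_min_over mu G)).
Proof.
move=> [P0 presP0]; apply: epsilon_spec.
have [P [presP minP]] := exists_minimal (Q := fun P => presents P G) mu (ex_intro _ P0 presP0).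
by exists (mu P); split; [exists P | move=> P' /minP].
Qed.

Lemma optimal_pres_long_relators G :
    finitely_presentable G -> (forall g : G, gmul g g = gone G -> g = gone G) ->
  exists P, [/\ presents P G, ell P = Tinv G & forall r, r \in prels P -> 3 <= size r].
Proof.
move=> fpG no2.
have [[P0 [presP0 ellP0]] minT] : is_min_over ell G (Tinv G) := is_min_over_epsilon ell fpG.
have [P [[presP ellP] minP]] := exists_minimal (Q := fun P => presents P G /\ ell P = Tinv G)
  pres_size (ex_intro _ P0 (conj presP0 ellP0)).
exists P; split=> // r Pr; rewrite leqNgt; apply/negP => short_r.
have [P' [presP' ellP' sizeP']] := smaller_pres_short_relator presP no2 Pr short_r.
have ellP'T : ell P' = Tinv G by apply/eqP; rewrite eqn_leq minT // -ellP ellP'.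
by have := minP P' (conj presP' ellP'T); rewrite leqNgt sizeP'.
Qed.

Lemma ell_le_ell1 P : ell P <= ell1 P.
Proof. by apply: leq_sum => r _; apply: leq_subr. Qed.

Lemma ell1_le_3ell P : (forall r, r \in prels P -> 3 <= size r) -> ell1 P <= 3 * ell P.
Proof.
move=> long; rewrite /ell /ell1 big_distrr /= !big_seq; apply: leq_sum => r /long.
(* the two occurrences of [size r] differ in convertible but distinct type arguments;
   generalizing merges them into one atom for lia *)
by move: (size r); lia.
Qed.

Lemma Tinv_le_T1inv G : finitely_presentable G -> Tinv G <= T1inv G.
Proof.
move=> fpG.
have [_ minT] : is_min_over ell G (Tinv G) := is_min_over_epsilon ell fpG.
have [[P [presP <-]] _] : is_min_over ell1 G (T1inv G) := is_min_over_epsilon ell1 fpG.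
exact: leq_trans (minT P presP) (ell_le_ell1 P).
Qed.

Theorem lemma5p2 (G : group) (fpG : finitely_presentable G)
    (no2 : forall g : G, gmul g g = gone G -> g = gone G) :
  exists P : presentation,
    [/\ presents P G,
        ell P = Tinv G,
        (forall r, r \in prels P -> 3 <= size r),
        T1inv G <= ell1 P <= 3 * ell P &
        Tinv G <= T1inv G <= 3 * Tinv G].
Proof.
have [P [presP ellP long]] := optimal_pres_long_relators fpG no2.
have [_ minT1] : is_min_over ell1 G (T1inv G) := is_min_over_epsilon ell1 fpG.
have T1_le := minT1 P presP.
have le3 := ell1_le_3ell long.
exists P; split=> //; first by rewrite T1_le.
by rewrite Tinv_le_T1inv // -ellP (leq_trans T1_le le3).
Qed.
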